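(* Let $\theta\in(-\pi/2,\pi/2)$. For $t\not\equiv u\pmod{2\pi}$ let $L^*_\theta(t)$ be the image of $L(t)$ under the clockwise rotation by $\theta$ about $P(t)$, and let $\Delta^*_\theta$ be the envelope of the family $\{L^*_\theta(t)\}$. Then the envelope point of $L^*_\theta(t)$ is $$\Delta^*_\theta(t)=M+\cos\theta\; R_{-\theta}\big(\Delta_u(t)-M\big),$$ where $R_{-\theta}$ is the clockwise rotation about the origin by angle $\theta$. Thus $\Delta^*_\theta$ is the image of $\Delta_u$ under the similarity composed of a rotation about $M$ by $\theta$ (clockwise) and the homothety with center $M$ and factor $\cos\theta$; in particular the region bounded by $\Delta^*_\theta$ has area $\dfrac{\pi c^4\cos^2\theta}{2ab}$, independent of $u$.
   Context: Let $a>b>0$ and $c>0$ with $c^2=a^2-b^2$. Let $\mathcal{E}$ be the ellipse $x^2/a^2+y^2/b^2=1$, parametrized by $P(t)=(a\cos t,b\sin t)$. Fix $u\in\mathbb{R}$ and let $M=(a\cos u,b\sin u)$. For $t\not\equiv u$, $L(t)$ is the line through $P(t)$ perpendicular to $P(t)-M$. Let $\Delta_u(t)=(x_u(t),y_u(t))$, where $x_u(t)=\frac1a\big(c^2(1+\cos(t+u))\cos t-a^2\cos u\big)$ and $y_u(t)=\frac1b\big(c^2\cos t\sin(t+u)-c^2\sin t-a^2\sin u\big)$; $\Delta_u(t)$ is the envelope point of $L(t)$ (the negative pedal curve of $\mathcal{E}$ with respect to $M$). The envelope point of a smooth one-parameter family of lines $\{\ell(t)\}$ is the point of $\ell(t)$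 satisfying both $\ell(t)$'s equation and its $t$-derivative. *)

From Stdlib Require Import Reals.
From Coquelicot Require Import Coquelicot.
Open Scope R_scope.

Definition pt := (R * R)%type.
Definition padd (v w : pt) : pt := (fst v + fst w, snd v + snd w).
Definition psub (v w : pt) : pt := (fst v - fst w, snd v - snd w).
Definition pscal (k : R) (v : pt) : pt := (k * fst v, k * snd v).
Definition pdot (v w : pt) : R := fst v * fst w + snd v * snd w.

Definition rot_cw (theta : R) (v : pt) : pt :=
  (fst v * cos theta + snd v * sin theta, - fst v * sin theta + snd v * cos theta).

Definition rot_cw_about (theta : R) (C X : pt) : pt := padd C (rot_cw theta (psub X C)).

Definition Pe (a b t : R) : pt := (a * cos t, b * sin t).

Definition Lline (a b u t : R) (X : pt) : Prop :=
  pdot (psub X (Pe a b t)) (psub (Pe a b t) (Pe a b u)) = 0.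

Definition image_set (f : pt -> pt) (S : pt -> Prop) (Y : pt) : Prop :=
  exists X, S X /\ Y = f X.

Definition Lstar (a b u theta t : R) : pt -> Prop :=
  image_set (rot_cw_about theta (Pe a b t)) (Lline a b u t).

Definition is_envelope_point (F : R -> pt -> R) (t : R) (X : pt) : Prop :=
  F t X = 0 /\ is_derive (fun s => F s X) t 0.

(* Delta_u(t), the negative pedal curve of the ellipse w.r.t. M = P(u) *)
Definition Delta_u (a b c u t : R) : pt :=
  ( / a * (c ^ 2 * (1 + cos (t + u)) * cos t - a ^ 2 * cos u),
    / b * (c ^ 2 * cos t * sin (t + u) - c ^ 2 * sin t - a ^ 2 * sin u) ).

Definition signed_area (g : R -> pt) (t0 t1 : R) : R :=
  / 2 * RInt (fun t => fst (g t) * Derive (fun s => snd (g s)) t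
                      - snd (g t) * Derive (fun s => fst (g s)) t) t0 t1.

From Stdlib Require Import Reals ZArith Lra.
From Coquelicot Require Import Coquelicot.
Open Scope R_scope.

(* Proof of Proposition 9.1.  Write P = P(t), N = P - M, T = P'(t) and R for
   the clockwise rotation by theta.  The line L*_theta(t) is {X | <X-P, R N> = 0},
   and its t-derivative is <X-P, R T> - <T, R N>; so the envelope point is the
   solution of two linear equations with normals R N, R T, which are
   independent because cross(N, T) = ab(1 - cos(t-u)) <> 0.
   The pedal point Delta_u solves the unrotated system (a trigonometric
   identity using c^2 = a^2 - b^2), and a short computation with rotations
   shows that the similar point M + cos(theta) R (Delta_u - M) solves the
   rotated one; uniqueness then identifies it as the envelope point.
   For the area we prove that the area integrand of any similarity image
   M + k R (h - M) of a closed curve h is k^2 times that of h up to an exact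
   derivative, so the area scales by k^2.  Writing Delta_u as a centre plus
   harmonics of orders 1 and 2 shows that its integrand is -c^4/(2ab) plus a
   derivative of a 2pi-periodic function, whence the area pi c^4 cos^2/(2ab). *)

Definition cross (v w : pt) : R := fst v * snd w - snd v * fst w.

Lemma sin2_cos2_pow (x : R) : sin x ^ 2 + cos x ^ 2 = 1.
Proof. pose proof (sin2_cos2 x) as H; unfold Rsqr in H; lra. Qed.

Lemma psub_padd (P v : pt) : psub (padd P v) P = v.
Proof. destruct P, v; unfold psub, padd; simpl; f_equal; ring. Qed.

Lemma padd_psub (P X : pt) : padd P (psub X P) = X.
Proof. destruct P, X; unfold psub, padd; simpl; f_equal; ring. Qed.

Lemma pdot_psub_shift (X D P n : pt) :
  pdot (psub X D) n = pdot (psub X P) n - pdot (psub D P) n.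
Proof. unfold pdot, psub; simpl; ring. Qed.

Lemma psub_eq0 (X D : pt) : psub X D = (0, 0) -> X = D.
Proof.
  destruct X as [x1 x2], D as [d1 d2]; unfold psub; simpl; intro H; injection H as H1 H2.
  f_equal; lra.
Qed.

Lemma pdot_rot_cw (theta : R) (v w : pt) :
  pdot (rot_cw theta v) (rot_cw theta w) = pdot v w.
Proof.
  transitivity ((sin theta ^ 2 + cos theta ^ 2) * pdot v w).
  - unfold pdot, rot_cw; simpl; ring.
  - rewrite sin2_cos2_pow; ring.
Qed.

Lemma cross_rot_cw (theta : R) (v w : pt) :
  cross (rot_cw theta v) (rot_cw theta w) = cross v w.
Proof.
  transitivity ((sin theta ^ 2 + cos theta ^ 2) * cross v w).
  - unfold cross, rot_cw; simpl; ring.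
  - rewrite sin2_cos2_pow; ring.
Qed.

Lemma rot_cw_opp_cancel (theta : R) (v : pt) : rot_cw theta (rot_cw (- theta) v) = v.
Proof.
  destruct v as [x y]; unfold rot_cw; simpl; rewrite cos_neg, sin_neg.
  f_equal; [transitivity (x * (sin theta ^ 2 + cos theta ^ 2))
           | transitivity (y * (sin theta ^ 2 + cos theta ^ 2))];
  try ring; rewrite sin2_cos2_pow; ring.
Qed.

Lemma zero_of_two_dots (n m v : pt) :
  cross n m <> 0 -> pdot v n = 0 -> pdot v m = 0 -> v = (0, 0).
Proof.
  destruct v as [x y]; unfold cross, pdot; simpl; intros Hnm Hn Hm.
  assert (Hx : x * (fst n * snd m - snd n * fst m) = 0).
  { transitivity ((x * fst n + y * snd n) * snd m - (x * fst m + y * snd m) * snd n);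
      [ring | rewrite Hn, Hm; ring]. }
  assert (Hy : y * (fst n * snd m - snd n * fst m) = 0).
  { transitivity ((x * fst m + y * snd m) * fst n - (x * fst n + y * snd n) * fst m);
      [ring | rewrite Hn, Hm; ring]. }
  apply Rmult_integral in Hx; apply Rmult_integral in Hy.
  destruct Hx as [-> | Hx]; [|contradiction]; destruct Hy as [-> | Hy]; [|contradiction].
  reflexivity.
Qed.

Definition similar (M : pt) (k theta : R) (X : pt) : pt :=
  padd M (pscal k (rot_cw theta (psub X M))).

Lemma similar_as_rotated_homothety (M X : pt) (k theta : R) :
  similar M k theta X = rot_cw_about theta M (padd M (pscal k (psub X M))).
Proof.
  destruct M, X; unfold similar, rot_cw_about, padd, pscal, psub, rot_cw; simpl; f_equal; ring.
Qed.

Lemma rotated_line (theta : R) (P N X : pt) :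
  pdot (psub X P) (rot_cw theta N) = 0 <->
  image_set (rot_cw_about theta P) (fun Y => pdot (psub Y P) N = 0) X.
Proof.
  unfold image_set, rot_cw_about; split.
  - intro HX; exists (padd P (rot_cw (- theta) (psub X P))).
    rewrite psub_padd, rot_cw_opp_cancel, padd_psub; split; [|reflexivity].
    rewrite <- (pdot_rot_cw theta), rot_cw_opp_cancel; exact HX.
  - intros [Y [HY ->]]; rewrite psub_padd, pdot_rot_cw; exact HY.
Qed.

(* The key
   identities are <R v, R w> = <v, w> and <v, R w> + <w, R v> = 2 cos theta <v, w>. *)
Lemma rotated_envelope (theta : R) (M P T D : pt) :
  pdot (psub D P) (psub P M) = 0 ->
  pdot (psub D P) T = pdot T (psub P M) ->
  let D' := similar M (cos theta) theta D in
  pdot (psub D' P) (rot_cw theta (psub P M)) = 0 /\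
  pdot (psub D' P) (rot_cw theta T) = pdot T (rot_cw theta (psub P M)).
Proof.
  intros HN HT D'; set (N := psub P M) in *.
  set (s := sin theta ^ 2 + cos theta ^ 2).
  assert (Hs : s = 1) by apply sin2_cos2_pow.
  split.
  - transitivity (cos theta * s * pdot (psub D P) N + cos theta * (s - 1) * pdot N N).
    + unfold D', similar, N, s, pdot, psub, padd, pscal, rot_cw; simpl; ring.
    + rewrite HN, Hs; ring.
  - apply Rminus_diag_uniq.
    transitivity (cos theta * s * (pdot (psub D P) T - pdot T N)
                  + 2 * cos theta * (s - 1) * pdot N T).
    + unfold D', similar, N, s, pdot, psub, padd, pscal, rot_cw; simpl; ring.
    + rewrite HT, Hs; ring.
Qed.

Definition tangent (a b t : R) : pt := (- a * sin t, b * cos t).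

Lemma cross_chord_tangent (a b u t : R) :
  cross (psub (Pe a b t) (Pe a b u)) (tangent a b t) = a * b * (1 - cos (t - u)).
Proof.
  rewrite cos_minus, <- (sin2_cos2_pow t).
  unfold cross, psub, Pe, tangent; simpl; ring.
Qed.

Lemma cos_eq_1_period (x : R) : cos x = 1 -> exists k : Z, x = 2 * IZR k * PI.
Proof.
  intro H. replace x with (2 * (x / 2)) in H by field.
  rewrite cos_2a_sin in H.
  assert (Hs : sin (x / 2) = 0) by nra.
  destruct (sin_eq_0_0 _ Hs) as [k Hk]; exists k; lra.
Qed.

Lemma chord_tangent_independent (a b u t : R) :
  a <> 0 -> b <> 0 -> (forall k : Z, t <> u + 2 * IZR k * PI) ->
  cross (psub (Pe a b t) (Pe a b u)) (tangent a b t) <> 0.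
Proof.
  intros Ha Hb Ht; rewrite cross_chord_tangent.
  apply Rmult_integral_contrapositive; split; [apply Rmult_integral_contrapositive; auto|].
  intro H1; destruct (cos_eq_1_period (t - u)) as [k Hk]; [lra|].
  apply (Ht k); lra.
Qed.

Definition rotated_normal_eq (a b u theta t : R) (X : pt) : R :=
  pdot (psub X (Pe a b t)) (rot_cw theta (psub (Pe a b t) (Pe a b u))).

Lemma is_derive_rotated_normal (a b theta : R) (M X : pt) (t : R) :
  is_derive (fun s => pdot (psub X (Pe a b s)) (rot_cw theta (psub (Pe a b s) M))) t
    (pdot (psub X (Pe a b t)) (rot_cw theta (tangent a b t))
     - pdot (tangent a b t) (rot_cw theta (psub (Pe a b t) M))).
Proof.
  unfold pdot, psub, Pe, rot_cw, tangent; simpl.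
  auto_derive; [trivial | ring].
Qed.

(* Delta_u(t) is the envelope point of the unrotated family L(t): both defects are
   multiples of sin^2 + cos^2 - 1 once c^2 = a^2 - b^2 is substituted. *)
Lemma Delta_u_envelope (a b c u t : R) :
  a <> 0 -> b <> 0 -> c ^ 2 = a ^ 2 - b ^ 2 ->
  pdot (psub (Delta_u a b c u t) (Pe a b t)) (psub (Pe a b t) (Pe a b u)) = 0 /\
  pdot (psub (Delta_u a b c u t) (Pe a b t)) (tangent a b t)
    = pdot (tangent a b t) (psub (Pe a b t) (Pe a b u)).
Proof.
  intros Ha Hb Hc.
  unfold Delta_u; rewrite Hc, cos_plus, sin_plus.
  set (Et := sin t ^ 2 + cos t ^ 2 - 1); set (Eu := sin u ^ 2 + cos u ^ 2 - 1).
  assert (Ht0 : Et = 0) by (unfold Et; rewrite sin2_cos2_pow; ring).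
  assert (Hu0 : Eu = 0) by (unfold Eu; rewrite sin2_cos2_pow; ring).
  split.
  - transitivity ((a ^ 2 - b ^ 2) * cos t * (cos u * Et - cos t * Eu) - a ^ 2 * (Et - Eu)).
    + unfold Et, Eu, pdot, psub, Pe, tangent; simpl; field; auto.
    + rewrite Ht0, Hu0; ring.
  - apply Rminus_diag_uniq.
    transitivity ((a ^ 2 - b ^ 2) * cos t * sin u * Et).
    + unfold Et, pdot, psub, Pe, tangent; simpl; field; auto.
    + rewrite Ht0; ring.
Qed.

Lemma envelope_rotated_family (a b c u theta t : R) :
  a <> 0 -> b <> 0 -> c ^ 2 = a ^ 2 - b ^ 2 ->
  (forall k : Z, t <> u + 2 * IZR k * PI) ->
  let D := similar (Pe a b u) (cos theta) theta (Delta_u a b c u t) in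
  is_envelope_point (rotated_normal_eq a b u theta) t D /\
  (forall X, is_envelope_point (rotated_normal_eq a b u theta) t X -> X = D).
Proof.
  intros Ha Hb Hc Ht D.
  set (P := Pe a b t); set (M := Pe a b u); set (T := tangent a b t).
  destruct (Delta_u_envelope a b c u t Ha Hb Hc) as [HN HT].
  destruct (rotated_envelope theta M P T (Delta_u a b c u t) HN HT) as [EN ET].
  change (similar M (cos theta) theta (Delta_u a b c u t)) with D in EN, ET.
  assert (Hder : forall X, is_derive (fun s => rotated_normal_eq a b u theta s X) t
            (pdot (psub X P) (rot_cw theta T) - pdot T (rot_cw theta (psub P M))))
    by (intro X; apply is_derive_rotated_normal).
  split.
  - split; [exact EN|].
    replace 0 with (pdot (psub D P) (rot_cw theta T) - pdot T (rot_cw theta (psub P M)))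
      by (rewrite ET; ring).
    apply Hder.
  - intros X [HX HdX].
    assert (HXT : pdot (psub X P) (rot_cw theta T) - pdot T (rot_cw theta (psub P M)) = 0)
      by (rewrite <- (is_derive_unique _ _ _ (Hder X)); exact (is_derive_unique _ _ _ HdX)).
    apply psub_eq0, (zero_of_two_dots (rot_cw theta (psub P M)) (rot_cw theta T)).
    + rewrite cross_rot_cw; exact (chord_tangent_independent a b u t Ha Hb Ht).
    + rewrite (pdot_psub_shift X D P); unfold rotated_normal_eq in HX; fold P M in HX.
      rewrite HX, EN; ring.
    + rewrite (pdot_psub_shift X D P), ET; lra.
Qed.

Lemma is_derive_affine2 (F f g : R -> R) (e p q t df dg l : R) :
  is_derive f t df -> is_derive g t dg ->
  (forall s, F s = e + p * f s + q * g s) -> l = p * df + q * dg ->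
  is_derive F t l.
Proof.
  intros Hf Hg HF ->.
  apply (is_derive_ext (fun s => plus (plus e (p * f s)) (q * g s))); [intro s; now rewrite HF|].
  replace (p * df + q * dg) with (plus (plus zero (p * df)) (q * dg))
    by (unfold plus, zero; simpl; ring).
  apply (is_derive_plus (fun s => plus e (p * f s)) (fun s => q * g s));
    [apply (is_derive_plus (fun _ => e) (fun s => p * f s));
     [apply (@is_derive_const R_AbsRing R_NormedModule)|] |];
    apply is_derive_scal; assumption.
Qed.

Lemma continuous_lin2 (F f g : R -> R) (p q t : R) :
  continuous f t -> continuous g t -> (forall s, F s = p * f s + q * g s) ->
  continuous F t.
Proof.
  intros Hf Hg HF.
  apply (continuous_ext (fun s => plus (scal p (f s)) (scal q (g s)))); [intro s; now rewrite HF|].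
  apply (@continuous_plus R_UniformSpace R_AbsRing R_NormedModule);
    apply (@continuous_scal_r R_UniformSpace R_AbsRing R_NormedModule); assumption.
Qed.

Lemma signed_area_exact (g dg : R -> pt) (G : R -> R) (K T : R) :
  (forall t, is_derive (fun s => fst (g s)) t (fst (dg t))) ->
  (forall t, is_derive (fun s => snd (g s)) t (snd (dg t))) ->
  (forall t, continuous (fun s => fst (dg s)) t) ->
  (forall t, continuous (fun s => snd (dg s)) t) ->
  (forall t, is_derive G t (cross (g t) (dg t) - K)) ->
  G T = G 0 ->
  signed_area g 0 T = K * T / 2.
Proof.
  intros Hg1 Hg2 Hdg1 Hdg2 HG HGT.
  unfold signed_area.
  rewrite (RInt_ext _ (fun t => cross (g t) (dg t))).
  2: { intros t _; unfold cross.
       replace (Derive (fun s => fst (g s)) t) with (fst (dg t))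
         by (symmetry; apply is_derive_unique, Hg1).
       replace (Derive (fun s => snd (g s)) t) with (snd (dg t))
         by (symmetry; apply is_derive_unique, Hg2).
       reflexivity. }
  assert (Hint : is_RInt (fun t => cross (g t) (dg t)) 0 T
                   (minus (K * T + G T) (K * 0 + G 0))).
  { apply (is_RInt_derive (fun t => K * t + G t)).
    - intros t _.
      apply (is_derive_affine2 _ (fun s => s) G 0 K 1 t 1 _ _ (is_derive_id t) (HG t));
        [intro s |]; ring.
    - intros t _.
      assert (Hc1 : continuous (fun s => fst (g s)) t)
        by (apply (@ex_derive_continuous R_AbsRing R_NormedModule); eexists; apply Hg1).
      assert (Hc2 : continuous (fun s => snd (g s)) t)
        by (apply (@ex_derive_continuous R_AbsRing R_NormedModule); eexists; apply Hg2).
      apply (continuous_minus (fun s => fst (g s) * snd (dg s)) (fun s => snd (g s) * fst (dg s)));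
        apply (continuous_mult (K := R_AbsRing)); auto. }
  rewrite (is_RInt_unique _ _ _ _ Hint), HGT.
  unfold minus, plus, opp; simpl; field.
Qed.

(* Similarity changes the area integrand by the factor k^2 up to the derivative
   of cross(W, h) for a fixed vector W. *)
Lemma cross_similar (M : pt) (k theta : R) (X V : pt) :
  cross (similar M k theta X) (pscal k (rot_cw theta V))
  = k ^ 2 * cross X V + cross (psub (pscal k (rot_cw (- theta) M)) (pscal (k ^ 2) M)) V.
Proof.
  set (s := sin theta ^ 2 + cos theta ^ 2).
  transitivity (k ^ 2 * cross X V + cross (psub (pscal k (rot_cw (- theta) M)) (pscal (k ^ 2) M)) V
                + k ^ 2 * (s - 1) * (cross X V - cross M V)).
  - unfold s, similar, cross, padd, psub, pscal, rot_cw; simpl; rewrite cos_neg, sin_neg; ring.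
  - unfold s; rewrite sin2_cos2_pow; ring.
Qed.

Section SmoothCurve.

Variables (h dh : R -> pt).
Hypothesis h_fst : forall t, is_derive (fun s => fst (h s)) t (fst (dh t)).
Hypothesis h_snd : forall t, is_derive (fun s => snd (h s)) t (snd (dh t)).

Lemma is_derive_cross_const (v : pt) (t : R) :
  is_derive (fun s => cross v (h s)) t (cross v (dh t)).
Proof.
  apply (is_derive_affine2 _ _ _ 0 (- snd v) (fst v) t _ _ _ (h_fst t) (h_snd t));
    [intro s |]; unfold cross; ring.
Qed.

Lemma is_derive_similar (M : pt) (k theta t : R) :
  is_derive (fun s => fst (similar M k theta (h s))) t
    (fst (pscal k (rot_cw theta (dh t)))) /\
  is_derive (fun s => snd (similar M k theta (h s))) t
    (snd (pscal k (rot_cw theta (dh t)))).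
Proof.
  split.
  - apply (is_derive_affine2 _ _ _
      (fst M - k * (fst M * cos theta + snd M * sin theta))
      (k * cos theta) (k * sin theta) t _ _ _ (h_fst t) (h_snd t));
      [intro s |]; unfold similar, padd, pscal, rot_cw, psub; simpl; ring.
  - apply (is_derive_affine2 _ _ _
      (snd M - k * (- fst M * sin theta + snd M * cos theta))
      (- k * sin theta) (k * cos theta) t _ _ _ (h_fst t) (h_snd t));
      [intro s |]; unfold similar, padd, pscal, rot_cw, psub; simpl; ring.
Qed.

Hypothesis dh_fst : forall t, continuous (fun s => fst (dh s)) t.
Hypothesis dh_snd : forall t, continuous (fun s => snd (dh s)) t.

Lemma signed_area_similar (M : pt) (k theta : R) (G0 : R -> R) (K0 T : R) :
  (forall t, is_derive G0 t (cross (h t) (dh t) - K0)) ->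
  G0 T = G0 0 -> h T = h 0 ->
  signed_area (fun t => similar M k theta (h t)) 0 T = k ^ 2 * K0 * T / 2.
Proof.
  intros HG0 HG0T HhT.
  set (W := psub (pscal k (rot_cw (- theta) M)) (pscal (k ^ 2) M)).
  apply (signed_area_exact _ (fun t => pscal k (rot_cw theta (dh t)))
                             (fun t => k ^ 2 * G0 t + cross W (h t))).
  - intro t; apply is_derive_similar.
  - intro t; apply is_derive_similar.
  - intro t; apply (continuous_lin2 _ _ _ (k * cos theta) (k * sin theta) t (dh_fst t) (dh_snd t)).
    intro s; unfold pscal, rot_cw; simpl; ring.
  - intro t; apply (continuous_lin2 _ _ _ (- k * sin theta) (k * cos theta) t (dh_fst t) (dh_snd t)).
    intro s; unfold pscal, rot_cw; simpl; ring.
  - intro t.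
    apply (is_derive_affine2 _ _ _ 0 (k ^ 2) 1 t _ _ _ (HG0 t) (is_derive_cross_const W t));
      [intro s; ring |].
    rewrite cross_similar; fold W; ring.
  - rewrite HG0T, HhT; reflexivity.
Qed.

End SmoothCurve.

Definition pedal_center (a b c u : R) : pt :=
  ((c ^ 2 / 2 - a ^ 2) * cos u / a, (c ^ 2 / 2 - a ^ 2) * sin u / b).

Lemma Delta_u_fourier (a b c u t : R) : a <> 0 -> b <> 0 ->
  Delta_u a b c u t =
  (fst (pedal_center a b c u) + c ^ 2 / a * cos t + c ^ 2 / (2 * a) * cos (2 * t + u),
   snd (pedal_center a b c u) - c ^ 2 / b * sin t + c ^ 2 / (2 * b) * sin (2 * t + u)).
Proof.
  intros Ha Hb.
  assert (Hc : cos (2 * t + u) = 2 * cos t * cos (t + u) - cos u).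
  { pose proof (cos_plus t (t + u)) as E1; pose proof (cos_minus (t + u) t) as E2.
    replace (t + (t + u)) with (2 * t + u) in E1 by ring.
    replace (t + u - t) with u in E2 by ring. lra. }
  assert (Hs : sin (2 * t + u) = 2 * cos t * sin (t + u) - sin u).
  { pose proof (sin_plus t (t + u)) as E1; pose proof (sin_minus (t + u) t) as E2.
    replace (t + (t + u)) with (2 * t + u) in E1 by ring.
    replace (t + u - t) with u in E2 by ring. lra. }
  unfold Delta_u, pedal_center; simpl; rewrite Hc, Hs; f_equal; field; auto.
Qed.

(* Velocity of the pedal curve, read off from the Fourier form. *)
Definition dDelta_u (a b c u t : R) : pt :=
  (- (c ^ 2 / a) * (sin t + sin (2 * t + u)), c ^ 2 / b * (cos (2 * t + u) - cos t)).

Lemma is_derive_Delta_u (a b c u t : R) : a <> 0 -> b <> 0 ->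
  is_derive (fun s => fst (Delta_u a b c u s)) t (fst (dDelta_u a b c u t)) /\
  is_derive (fun s => snd (Delta_u a b c u s)) t (snd (dDelta_u a b c u t)).
Proof.
  intros Ha Hb; split;
    (eapply is_derive_ext; [intro s; rewrite (Delta_u_fourier a b c u s Ha Hb); reflexivity|]);
    unfold dDelta_u; simpl; auto_derive; try trivial; field; auto.
Qed.

Lemma continuous_dDelta_u (a b c u t : R) :
  continuous (fun s => fst (dDelta_u a b c u s)) t /\
  continuous (fun s => snd (dDelta_u a b c u s)) t.
Proof.
  split; apply (@ex_derive_continuous R_AbsRing R_NormedModule);
    unfold dDelta_u; simpl; auto_derive; trivial.
Qed.

(* Area integrand of Delta_u: the two harmonics contribute -c^4/ab and c^4/2ab,
   their interaction the derivative of c^4/(6ab) sin(3t+u), the centre an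
   exact term. *)
Lemma cross_Delta_u (a b c u t : R) : a <> 0 -> b <> 0 ->
  cross (Delta_u a b c u t) (dDelta_u a b c u t)
  = - (c ^ 4 / (2 * a * b))
    + cross (pedal_center a b c u) (dDelta_u a b c u t)
    + c ^ 4 / (2 * a * b) * cos (3 * t + u).
Proof.
  intros Ha Hb.
  rewrite Delta_u_fourier by assumption.
  replace (3 * t + u) with (t + (2 * t + u)) by ring; rewrite (cos_plus t (2 * t + u)).
  set (E1 := sin t ^ 2 + cos t ^ 2 - 1).
  set (E2 := sin (2 * t + u) ^ 2 + cos (2 * t + u) ^ 2 - 1).
  transitivity (- (c ^ 4 / (2 * a * b))
                + cross (pedal_center a b c u) (dDelta_u a b c u t)
                + c ^ 4 / (2 * a * b) * (cos t * cos (2 * t + u) - sin t * sin (2 * t + u))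
                - c ^ 4 / (a * b) * E1 + c ^ 4 / (2 * a * b) * E2).
  - unfold E1, E2, cross, dDelta_u, pedal_center; simpl; field; auto.
  - unfold E1, E2; rewrite !sin2_cos2_pow; ring.
Qed.

Lemma Delta_u_periodic (a b c u : R) : Delta_u a b c u (2 * PI) = Delta_u a b c u 0.
Proof.
  unfold Delta_u; rewrite cos_2PI, sin_2PI, cos_0, sin_0, Rplus_0_l.
  replace (2 * PI + u) with (u + 2 * INR 1 * PI) by (simpl; ring).
  rewrite cos_period, sin_period; reflexivity.
Qed.

Lemma signed_area_similar_pedal (a b c u : R) (M : pt) (k theta : R) :
  a <> 0 -> b <> 0 ->
  signed_area (fun t => similar M k theta (Delta_u a b c u t)) 0 (2 * PI)
  = - (PI * c ^ 4 * k ^ 2 / (2 * a * b)).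
Proof.
  intros Ha Hb.
  set (Z := pedal_center a b c u).
  assert (HD := fun t => is_derive_Delta_u a b c u t Ha Hb).
  assert (HC := continuous_dDelta_u a b c u).
  rewrite (signed_area_similar (Delta_u a b c u) (dDelta_u a b c u)
             (fun t => proj1 (HD t)) (fun t => proj2 (HD t))
             (fun t => proj1 (HC t)) (fun t => proj2 (HC t)) M k theta
             (fun t => cross Z (Delta_u a b c u t) + c ^ 4 / (6 * a * b) * sin (3 * t + u))
             (- (c ^ 4 / (2 * a * b))) (2 * PI)).
  - field; auto.
  - intro t.
    assert (Hsin : is_derive (fun s => sin (3 * s + u)) t (3 * cos (3 * t + u)))
      by (auto_derive; [trivial | ring]).
    apply (is_derive_affine2 _ _ _ 0 1 (c ^ 4 / (6 * a * b)) t _ _ _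
             (is_derive_cross_const _ _ (fun t => proj1 (HD t)) (fun t => proj2 (HD t)) Z t)
             Hsin); [intro s; ring |].
    rewrite cross_Delta_u by assumption; fold Z; field; auto.
  - rewrite Delta_u_periodic.
    replace (3 * (2 * PI) + u) with (u + 2 * INR 3 * PI) by (simpl; ring).
    replace (3 * 0 + u) with u by ring.
    rewrite sin_period; reflexivity.
  - apply Delta_u_periodic.
Qed.

Theorem proposition9p1 (a b c u theta : R) :
  0 < b -> b < a -> 0 < c -> c ^ 2 = a ^ 2 - b ^ 2 ->
  - (PI / 2) < theta < PI / 2 ->
  let M := Pe a b u in
  (* defining equation of the line L*_theta(t): its normal is R_{-theta}(P(t) - M) *)
  let F := fun (t : R) (X : pt) =>
             pdot (psub X (Pe a b t)) (rot_cw theta (psub (Pe a b t) M)) in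
  let Dstar := fun t : R =>
             padd M (pscal (cos theta) (rot_cw theta (psub (Delta_u a b c u t) M))) in
  (forall t : R, (forall k : Z, t <> u + 2 * IZR k * PI) ->
     (forall X : pt, F t X = 0 <-> Lstar a b u theta t X) /\
     is_envelope_point F t (Dstar t) /\
     (forall X : pt, is_envelope_point F t X -> X = Dstar t)) /\
  (forall t : R, Dstar t = rot_cw_about theta M
                     (padd M (pscal (cos theta) (psub (Delta_u a b c u t) M)))) /\
  Rabs (signed_area Dstar 0 (2 * PI)) = PI * c ^ 4 * (cos theta) ^ 2 / (2 * a * b).
Proof.
  intros Hb Hba Hc Hc2 _ M F Dstar.
  assert (Ha0 : a <> 0) by lra; assert (Hb0 : b <> 0) by lra.
  split; [|split].
  - intros t Ht; split; [intro X; apply rotated_line|].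
    exact (envelope_rotated_family a b c u theta t Ha0 Hb0 Hc2 Ht).
  - intro t; apply similar_as_rotated_homothety.
  - change (Rabs (signed_area (fun t => similar M (cos theta) theta (Delta_u a b c u t)) 0 (2 * PI))
            = PI * c ^ 4 * cos theta ^ 2 / (2 * a * b)).
    rewrite signed_area_similar_pedal, Rabs_Ropp by assumption.
    apply Rabs_right, Rle_ge, Rmult_le_pos; [| left; apply Rinv_0_lt_compat; nra].
    replace (c ^ 4) with ((c ^ 2) ^ 2) by ring.
    pose proof PI_RGT_0; apply Rmult_le_pos; [apply Rmult_le_pos; [lra|] |]; apply pow2_ge_0.
Qed.
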